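(* Let $R$ be a commutative ring equipped with an exhaustive $\Gamma$-filtration $FR=\{F_\gamma R\}_{\gamma\in\Gamma}$, and put $R_0=F_0R$ (a subring of $R$ containing $1$). Let $R\langle X\rangle=R\langle X_1,\dots,X_n\rangle$ and let $\mathcal I$ be an ideal of $R\langle X\rangle$ generated by a subset $\mathcal G\subset R_0\langle X\rangle=R_0\langle X_1,\dots,X_n\rangle$ which is a monic Gröbner basis of $\mathcal I$ in $R\langle X\rangle$ with respect to a monomial ordering $\prec$ on $\mathcal B_R$, with $\mathrm{LM}(g)\neq 1$ for every $g\in\mathcal G$. Let $A=R\langle X\rangle/\mathcal I$ and let $\overline{N(\mathcal G)}$ be the image of $N(\mathcal G)$ in $A$. For $\gamma\in\Gamma$ put $$F_\gamma A=\Big\{a=\textstyle\sum_i\lambda_i\bar w_i \;\Big|\; \lambda_i\in F_\gamma R,\ \bar w_i\in\overline{N(\mathcal G)}\Big\}.$$ Then $FA=\{F_\gamma A\}_{\gamma\in\Gamma}$ is an exhaustive $\Gamma$-filtration of $A$, and $F_\gamma R=R\cap F_\gamma A$ for every $\gamma\in\Gamma$ (where $R$ is identified with its image $R\cdot\bar 1$ in $A$).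
   Context: $\Gamma$ is a totally ordered (not necessarily commutative) monoid with ordering $<$, whose operation is written $+$ and neutral element $0$. An exhaustive $\Gamma$-filtration of a ring $S$ is a family $\{F_\gamma S\}_{\gamma\in\Gamma}$ of additive subgroups with (F1) $S=\bigcup_\gamma F_\gamma S$; (F2) $F_{\gamma_1}S\subseteq F_{\gamma_2}S$ whenever $\gamma_1<\gamma_2$; (F3) $F_\gamma S\cdot F_\tau S\subseteq F_{\gamma+\tau}S$; (F4) $1\in F_0S$. For a commutative ring $D$, $D\langle X\rangle=D\langle X_1,\dots,X_n\rangle$ is the free $D$-algebra, with standard $D$-basis $\mathcal B_D$ of words in $X_1,\dots,X_n$ (empty word $=1$). A monomial ordering is a well-ordering $\prec$ on words such that $u\prec v$ implies $wus\prec wvs$, and $w=uv$ implies $u\preceq w$, $v\preceq w$. For nonzero $f=\sum\lambda_iw_i$ ($\lambda_i\neq0$, $w_1\prec\dots\prec w_s$), $\mathrm{LM}(f)=w_s$ and $\mathrm{LC}(f)=\lambda_s$. A set $G$ is monic if $\mathrm{LC}(g)=1$ for all $g\in G$. A word $v$ divides $u$ if $u=wvs$ for words $w,s$. A monic Gröbner basis of an ideal $I$ is a monic subset $\mathcal G\subset I$ such that for every nonzero $f\in I$ there is $g\in\mathcal G$ with $\mathrm{LM}(g)\mid\mathrm{LM}(f)$. $N(\mathcal G)$ is the set of words not divisible by $\mathrm{LM}(g)$ for any $g\in\mathcal G$; when $\mathcal G$ is a monic Gröbner basis of $I$, $\overline{N(\mathcal G)}$ is a free $R$-basis of $R\langle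 X\rangle/I$. *)

From HB Require Import structures.
From mathcomp Require Import all_boot all_order all_algebra.
Set Implicit Arguments. Unset Strict Implicit. Unset Printing Implicit Defensive.
Import Order.TTheory GRing.Theory.
Local Open Scope ring_scope.

Definition ordered_monoid (d : Order.disp_t) (Gam : orderType d)
  (gadd : Gam -> Gam -> Gam) (g0 : Gam) : Prop :=
  [/\ (forall a b c, gadd a (gadd b c) = gadd (gadd a b) c),
      (forall a, gadd g0 a = a), (forall a, gadd a g0 = a) &
      (forall a b c, (a <= b)%O -> (gadd c a <= gadd c b)%O /\ (gadd a c <= gadd b c)%O)].

Definition exh_filtration (d : Order.disp_t) (Gam : orderType d)
  (gadd : Gam -> Gam -> Gam) (g0 : Gam) (R : comPzRingType)
  (F : Gam -> R -> Prop) : Prop :=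
  [/\ (forall g, F g 0 /\ (forall x y, F g x -> F g y -> F g (x - y))),
      (forall x : R, exists g, F g x),
      (forall g1 g2 x, (g1 < g2)%O -> F g1 x -> F g2 x),
      (forall g t x y, F g x -> F t y -> F (gadd g t) (x * y))  &
      F g0 1].

(* Words in X_1..X_n (X_i encoded as i : 'I_n); the empty word is 1. *)
Definition word (n : nat) := seq 'I_n.

Section FreeAlg.
Variables (R : comPzRingType) (n : nat).

(* An element of R<X> is its coefficient function (word -> R) with finite
   support; the ring operations are the usual ones (product = concatenation
   convolution). *)
Definition fsupp (f : word n -> R) : Prop :=
  exists s : seq (word n), forall w, f w != 0 -> w \in s.

Definition pzero : word n -> R := fun _ => 0.
Definition pone : word n -> R := fun w => (w == [::])%:R.
Definition pconst (c : R) : word n -> R := fun w => if w == [::] then c else 0.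
Definition padd (f g : word n -> R) : word n -> R := fun w => f w + g w.
Definition popp (f : word n -> R) : word n -> R := fun w => - f w.
Definition pmul (f g : word n -> R) : word n -> R :=
  fun w => \sum_(i < (size w).+1) f (take i w) * g (drop i w).

Definition lincomb (s : seq (R * word n)) : word n -> R :=
  fun w => \sum_(x <- s | x.2 == w) x.1.

Definition is_ideal (J : (word n -> R) -> Prop) : Prop :=
  [/\ (forall f, J f -> fsupp f), J pzero,
      (forall f g, J f -> J g -> J (padd f g)),
      (forall f, J f -> J (popp f)) &
      (forall f h, J f -> fsupp h -> J (pmul h f) /\ J (pmul f h))].

Definition ideal_gen (G : (word n -> R) -> Prop) : (word n -> R) -> Prop :=
  fun f => forall J, is_ideal J -> (forall g, G g -> J g) -> J f.

Definition preceq (prec : rel (word n)) (u v : word n) : Prop := u = v \/ prec u v.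

Definition monomial_ordering (prec : rel (word n)) : Prop :=
  [/\ (forall u, ~~ prec u u),
      (forall u v w, prec u v -> prec v w -> prec u w),
      (forall u v, [\/ u = v, prec u v | prec v u]) &
      well_founded (fun u v => prec u v)] /\
  (
      (forall u v w s, prec u v -> prec (w ++ u ++ s) (w ++ v ++ s)) /\
      (forall u v, preceq prec u (u ++ v) /\ preceq prec v (u ++ v))).

Definition is_LM (prec : rel (word n)) (f : word n -> R) (m : word n) : Prop :=
  f m != 0 /\ forall w, f w != 0 -> preceq prec w m.

Definition wdivides (v u : word n) : Prop := exists w s, u = w ++ v ++ s.

Definition monic_groebner (prec : rel (word n))
  (G I : (word n -> R) -> Prop) : Prop :=
  (forall g, G g -> I g /\ exists m, is_LM prec g m /\ g m = 1) /\
  (forall f, I f -> (exists w, f w != 0) ->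
     forall m, is_LM prec f m ->
       exists g m', [/\ G g, is_LM prec g m' & wdivides m' m]).

Definition normal_word (prec : rel (word n)) (G : (word n -> R) -> Prop)
  (w : word n) : Prop :=
  forall g m, G g -> is_LM prec g m -> ~ wdivides m w.

(* F_gamma A, on representatives f in R<X> of elements of A = R<X>/I:
   f + I = sum_i lambda_i (w_i + I) with lambda_i in F_gamma R, w_i in N(G). *)
Definition FA (d : Order.disp_t) (Gam : orderType d) (prec : rel (word n))
  (G I : (word n -> R) -> Prop) (F : Gam -> R -> Prop) (g : Gam)
  (f : word n -> R) : Prop :=
  exists s : seq (R * word n),
    [/\ (forall x, x \in s -> F g x.1),
        (forall x, x \in s -> normal_word prec G x.2) &
        I (padd f (popp (lincomb s)))].

(* An exhaustive Gamma-filtration of A = R<X>/I, where elements of A are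
   represented by elements of R<X> and the operations are those of R<X>
   (the predicate FA' is I-saturated, i.e. a predicate on classes). *)
Definition quot_exh_filtration (d : Order.disp_t) (Gam : orderType d)
  (gadd : Gam -> Gam -> Gam) (g0 : Gam) (I : (word n -> R) -> Prop)
  (FA' : Gam -> (word n -> R) -> Prop) : Prop :=
  [/\ (forall g, (forall f f', FA' g f -> fsupp f' -> I (padd f (popp f')) -> FA' g f')
                 /\ FA' g pzero
                 /\ (forall f h, FA' g f -> FA' g h -> FA' g (padd f (popp h)))),
      (forall f, fsupp f -> exists g, FA' g f),
      (forall g1 g2 f, (g1 < g2)%O -> FA' g1 f -> FA' g2 f),
      (forall g t f h, FA' g f -> FA' t h -> FA' (gadd g t) (pmul f h)) &
      FA' g0 pone].

End FreeAlg.

From HB Require Import structures.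
From mathcomp Require Import all_boot all_order all_algebra.
From mathcomp Require Import zify ring.
From Stdlib Require Import FunctionalExtensionality Classical.
Import Order.TTheory GRing.Theory.
Local Open Scope ring_scope.
Set Implicit Arguments. Unset Strict Implicit. Unset Printing Implicit Defensive.

(* Every f with coefficients in F_g R is congruent modulo I to a combination of
   normal words with coefficients in F_g R: as long as the leading word m of f is
   not normal, m = u LM(p) v for some p in G and we subtract f(m) u p v, which
   lowers the leading word, and whose coefficients stay in F_g R because those of
   p lie in F_0 R; the monomial ordering is well founded, so this terminates. This
   gives (F1) and (F3). Conversely, if c - sum_i lambda_i w_i lies in I with all
   w_i normal, it must vanish, since otherwise its leading word would be
   divisible by some LM(g) != 1; comparing constant terms gives c in F_g R. *)

Section FreeAlgebra.
Variables (R : comPzRingType) (n : nat).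
Implicit Types (f h : word n -> R) (u v w : word n) (c : R).

Definition pmono c u : word n -> R := fun w => if w == u then c else 0.

Definition psandwich c u f v : word n -> R := pmul (pmul (pmono c u) f) (pmono 1 v).

Lemma sum_neq0_exists k (F : 'I_k -> R) :
  \sum_(i < k) F i != 0 -> exists i, F i != 0.
Proof.
case: (pickP (fun i => F i != 0)) => [i Fi _|F0]; first by exists i.
by rewrite big1 ?eqxx // => i _; apply/eqP/negbFE/F0.
Qed.

Lemma fsupp0 : fsupp (@pzero R n).
Proof. by exists [::] => w; rewrite eqxx. Qed.

Lemma fsupp_pmono c u : fsupp (pmono c u).
Proof. by exists [:: u] => w; rewrite /pmono mem_seq1; case: (w =P u); rewrite ?eqxx. Qed.

Lemma fsupp_add f h : fsupp f -> fsupp h -> fsupp (padd f h).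
Proof.
move=> [s Hs] [t Ht]; exists (s ++ t) => w; rewrite /padd mem_cat.
have [/eqP fw0|/Hs -> //] := boolP (f w == 0).
by rewrite fw0 add0r => /Ht ->; rewrite orbT.
Qed.

Lemma fsupp_opp f : fsupp f -> fsupp (popp f).
Proof. by move=> [s Hs]; exists s => w; rewrite /popp oppr_eq0; apply: Hs. Qed.

Lemma fsupp_mul f h : fsupp f -> fsupp h -> fsupp (pmul f h).
Proof.
move=> [s Hs] [t Ht]; exists [seq x ++ y | x <- s, y <- t] => w.
case/sum_neq0_exists => i Hi; rewrite -(cat_take_drop i w); apply: allpairs_f.
  by apply: Hs; apply: contraNneq Hi => ->; rewrite mul0r.
by apply: Ht; apply: contraNneq Hi => ->; rewrite mulr0.
Qed.

Lemma lincomb_nz (s : seq (R * word n)) w : lincomb s w != 0 -> w \in map snd s.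
Proof.
apply: contraNT => Hw; apply/eqP; apply: big1_seq => x /andP [/eqP xw sx].
by move: Hw; rewrite -xw map_f.
Qed.

Lemma fsupp_lincomb (s : seq (R * word n)) : fsupp (lincomb s).
Proof. by exists (map snd s) => w; apply: lincomb_nz. Qed.

Lemma lincomb_cat (s t : seq (R * word n)) w :
  lincomb (s ++ t) w = lincomb s w + lincomb t w.
Proof. by rewrite /lincomb big_cat. Qed.

Lemma lincombN (s : seq (R * word n)) w :
  lincomb [seq (- x.1, x.2) | x <- s] w = - lincomb s w.
Proof. by rewrite /lincomb big_map sumrN. Qed.

Lemma lincomb1 c u : lincomb [:: (c, u)] = pmono c u.
Proof.
apply: functional_extensionality => w.
by rewrite /lincomb big_cons big_nil /= /pmono eq_sym; case: (w =P u); rewrite ?addr0.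
Qed.

Lemma pmul_pmonoL c u f y : pmul (pmono c u) f (u ++ y) = c * f y.
Proof.
have Hu : (size u < (size (u ++ y)).+1)%N by rewrite ltnS size_cat leq_addr.
rewrite /pmul (bigD1 (Ordinal Hu)) //= take_size_cat // drop_size_cat // /pmono eqxx.
rewrite big1 ?addr0 // => i; case: (take i (u ++ y) =P u) => [Eu|]; last by rewrite mul0r.
have Ei : nat_of_ord i = size u by rewrite -(congr1 size Eu) size_takel // -ltnS.
by rewrite -val_eqE /= Ei eqxx.
Qed.

Lemma pmul_pmonoR c v f y : pmul f (pmono c v) (y ++ v) = f y * c.
Proof.
have Hy : (size y < (size (y ++ v)).+1)%N by rewrite ltnS size_cat leq_addr.
rewrite /pmul (bigD1 (Ordinal Hy)) //= take_size_cat // drop_size_cat // /pmono eqxx.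
rewrite big1 ?addr0 // => i; case: (drop i (y ++ v) =P v) => [Ev|]; last by rewrite mulr0.
have Ei : nat_of_ord i = size y.
  move: (congr1 size Ev) (ltn_ord i); rewrite size_drop.
  by move: (nat_of_ord i) => k; rewrite size_cat; lia.
by rewrite -val_eqE /= Ei eqxx.
Qed.

Lemma pmul_pmonoL_supp c u f x :
  pmul (pmono c u) f x != 0 -> exists y, x = u ++ y.
Proof.
case/sum_neq0_exists => i; rewrite /pmono; case: (take i x =P u) => [<- _|].
  by exists (drop i x); rewrite cat_take_drop.
by rewrite mul0r eqxx.
Qed.

Lemma pmul_pmonoR_supp c v f x :
  pmul f (pmono c v) x != 0 -> exists y, x = y ++ v.
Proof.
case/sum_neq0_exists => i; rewrite /pmono; case: (drop i x =P v) => [<- _|].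
  by exists (take i x); rewrite cat_take_drop.
by rewrite mulr0 eqxx.
Qed.

Lemma psandwichE c u f v y : psandwich c u f v (u ++ y ++ v) = c * f y.
Proof. by rewrite /psandwich catA pmul_pmonoR pmul_pmonoL mulr1. Qed.

Lemma psandwich_supp c u f v x :
  psandwich c u f v x != 0 -> exists2 y, x = u ++ y ++ v & f y != 0.
Proof.
move=> Hx; have [z Ez] := pmul_pmonoR_supp Hx.
move: Hx; rewrite /psandwich Ez pmul_pmonoR mulr1 => /[dup] Hz.
case/pmul_pmonoL_supp => y Ey; exists y; first by rewrite Ey catA.
by move: Hz; rewrite Ey pmul_pmonoL; apply: contraNneq => ->; rewrite mulr0.
Qed.

Lemma pmul_subE f h a b :
  padd (pmul f h) (popp (pmul a b)) =
  padd (pmul (padd f (popp a)) h) (pmul a (padd h (popp b))).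
Proof.
apply: functional_extensionality => w; rewrite /padd /popp /pmul -sumrN -!big_split.
by apply: eq_bigr => i _ /=; rewrite mulrDl mulrDr mulNr mulrN addrA addrNK.
Qed.

Lemma fsupp_ideal : is_ideal (@fsupp R n).
Proof.
split=> //; [exact: fsupp0 | exact: fsupp_add | exact: fsupp_opp |].
by move=> f h Hf Hh; split; apply: fsupp_mul.
Qed.

Section Ideal.
Variable J : (word n -> R) -> Prop.
Hypothesis HJ : is_ideal J.

Lemma ideal_fsupp f : J f -> fsupp f. Proof. by case: HJ => H _ _ _ _; apply: H. Qed.
Lemma ideal0 : J (@pzero R n). Proof. by case: HJ. Qed.
Lemma idealD f h : J f -> J h -> J (padd f h). Proof. by case: HJ => _ _ H _ _; apply: H. Qed.
Lemma idealN f : J f -> J (popp f). Proof. by case: HJ => _ _ _ H _; apply: H. Qed.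

Lemma idealMl f h : J f -> fsupp h -> J (pmul h f).
Proof. by case: HJ => _ _ _ _ H Jf /(H _ _ Jf) []. Qed.

Lemma idealMr f h : J f -> fsupp h -> J (pmul f h).
Proof. by case: HJ => _ _ _ _ H Jf /(H _ _ Jf) []. Qed.

Lemma ideal_subC f h : J (padd f (popp h)) -> J (padd h (popp f)).
Proof.
move/idealN; congr J; apply: functional_extensionality => w.
by rewrite /padd /popp opprD opprK addrC.
Qed.

End Ideal.

Lemma ideal_gen_ideal (G : (word n -> R) -> Prop) :
  (forall g, G g -> fsupp g) -> is_ideal (ideal_gen G).
Proof.
move=> fsG; split.
- by move=> f; apply; [exact: fsupp_ideal | exact: fsG].
- by move=> J HJ _; apply: ideal0.
- by move=> f h If Ih J HJ GJ; apply: idealD (If J HJ GJ) (Ih J HJ GJ).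
- by move=> f If J HJ GJ; apply: idealN (If J HJ GJ).
- by move=> f h If Hh; split=> J HJ GJ; [apply: idealMl | apply: idealMr] => //; apply: If.
Qed.

Lemma ideal_gen_sub (G : (word n -> R) -> Prop) g : G g -> ideal_gen G g.
Proof. by move=> Gg J _; apply. Qed.

Section LeadingMonomial.
Variable prec : rel (word n).
Hypotheses (prec_irr : forall u, ~~ prec u u)
  (prec_trans : forall u v w, prec u v -> prec v w -> prec u w)
  (prec_total : forall u v, [\/ u = v, prec u v | prec v u]).

Lemma seq_has_max (S : seq (word n)) :
  S != [::] -> exists2 m, m \in S & forall w, w \in S -> preceq prec w m.
Proof.
elim: S => [//|a S IH] _; have [->|/IH [m Sm Smax]] := altP (S =P [::]).
  by exists a; rewrite ?mem_head // => w /[!inE] /eqP ->; left.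
have [->|am|ma] := prec_total a m.
- by exists m; rewrite ?mem_head // => w /[!inE] /orP [/eqP ->|/Smax]; [left|].
- by exists m; rewrite ?inE ?Sm ?orbT // => w /[!inE] /orP [/eqP ->|/Smax]; [right|].
- exists a; rewrite ?mem_head // => w /[!inE] /orP [/eqP ->|/Smax [->|wm]];
    [left | right | right; exact: prec_trans ma] => //.
Qed.

Lemma fsupp_LM f : fsupp f -> (forall w, f w = 0) \/ exists m, is_LM prec f m.
Proof.
case=> S HS; have [S0|] := altP ([seq w <- S | f w != 0] =P [::]).
  left=> w; apply/eqP/negPn/negP => fw; move: (mem_filter (fun w => f w != 0) w S).
  by rewrite S0 fw (HS _ fw).
case/seq_has_max => m /[!mem_filter] /andP [fm _] mmax; right; exists m; split=> // w fw.
by apply: mmax; rewrite mem_filter fw HS.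
Qed.

Lemma is_LM_uniq f m m' : is_LM prec f m -> is_LM prec f m' -> m = m'.
Proof.
move=> [fm mmax] [fm' m'max]; have [// | mm'] := m'max _ fm.
have [// | m'm] := mmax _ fm'.
by move: (prec_irr m); rewrite (prec_trans mm' m'm).
Qed.

End LeadingMonomial.
End FreeAlgebra.

Section Filtration.
Variables (d : Order.disp_t) (Gam : orderType d) (gadd : Gam -> Gam -> Gam) (g0 : Gam).
Variables (R : comPzRingType) (F : Gam -> R -> Prop).
Hypothesis HF : exh_filtration gadd g0 F.

Lemma filt0 g : F g 0. Proof. by case: HF => /(_ g) []. Qed.

Lemma filtB g x y : F g x -> F g y -> F g (x - y).
Proof. by case: HF => /(_ g) [_ H] _ _ _ _; apply: H. Qed.

Lemma filtN g x : F g x -> F g (- x).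
Proof. by move=> Fx; rewrite -sub0r; apply: filtB (filt0 g) Fx. Qed.

Lemma filtD g x y : F g x -> F g y -> F g (x + y).
Proof. by move=> Fx /filtN Fy; rewrite -(opprK y); apply: filtB. Qed.

Lemma filtM g t x y : F g x -> F t y -> F (gadd g t) (x * y).
Proof. by case: HF => _ _ _ H _; apply: H. Qed.

Lemma filt_le g1 g2 x : (g1 <= g2)%O -> F g1 x -> F g2 x.
Proof. by rewrite le_eqVlt => /orP [/eqP -> //|]; case: HF => _ _ H _ _; apply: H. Qed.

Lemma filt_sum g (I : Type) (r : seq I) (P : pred I) (E : I -> R) :
  (forall i, P i -> F g (E i)) -> F g (\sum_(i <- r | P i) E i).
Proof. by move=> FE; apply: big_ind => //; [exact: filt0 | exact: filtD]. Qed.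

Lemma filt_lincomb g n (s : seq (R * word n)) w :
  (forall x, x \in s -> F g x.1) -> F g (lincomb s w).
Proof. by move=> Fs; rewrite /lincomb big_seq_cond; apply: filt_sum => x /andP [/Fs]. Qed.

Lemma filt_bound (S : seq R) : exists g, forall x, x \in S -> F g x.
Proof.
elim: S => [|a S [g Sg]]; first by exists g0.
case: HF => _ /(_ a) [ga Fa] _ _ _; have [gag|gga] := leP ga g.
  by exists g => x /[!inE] /orP [/eqP ->|/Sg //]; apply: filt_le Fa.
by exists ga => x /[!inE] /orP [/eqP -> //|/Sg]; apply: filt_le (ltW gga).
Qed.

End Filtration.

Section QuotientFiltration.
Variables (d : Order.disp_t) (Gam : orderType d) (gadd : Gam -> Gam -> Gam) (g0 : Gam).
Hypothesis gadd0 : forall a, gadd a g0 = a.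
Variables (R : comPzRingType) (F : Gam -> R -> Prop).
Hypothesis HF : exh_filtration gadd g0 F.
Variables (n : nat) (prec : rel (word n)).
Hypotheses (prec_irr : forall u, ~~ prec u u)
  (prec_trans : forall u v w, prec u v -> prec v w -> prec u w)
  (prec_total : forall u v, [\/ u = v, prec u v | prec v u])
  (prec_wf : well_founded (fun u v => prec u v))
  (prec_cat : forall u v w s, prec u v -> prec (w ++ u ++ s) (w ++ v ++ s)).
Variable G : (word n -> R) -> Prop.
Hypotheses (G_fsupp : forall p, G p -> fsupp p)
  (G_coef : forall p w, G p -> F g0 (p w))
  (G_groebner : monic_groebner prec G (ideal_gen G))
  (G_LM_neq_nil : forall p m, G p -> is_LM prec p m -> m != [::]).
Implicit Types (f h : word n -> R) (u v w : word n) (c : R) (g t : Gam).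

Local Notation I := (ideal_gen G).
Local Notation FilA := (FA prec G (ideal_gen G) F).

Let I_ideal : is_ideal I := ideal_gen_ideal G_fsupp.

Lemma FA_fsupp g f : FilA g f -> fsupp f.
Proof.
case=> s [_ _ Is].
have -> : f = padd (padd f (popp (lincomb s))) (lincomb s).
  by apply: functional_extensionality => w; rewrite /padd /popp addrNK.
exact: fsupp_add (ideal_fsupp I_ideal Is) (fsupp_lincomb s).
Qed.

Lemma FA_sat g f f' : FilA g f -> I (padd f (popp f')) -> FilA g f'.
Proof.
move=> [s [Fs Ns Is]] Iff'; exists s; split=> //.
have -> : padd f' (popp (lincomb s)) =
          padd (padd f (popp (lincomb s))) (popp (padd f (popp f'))).
  by apply: functional_extensionality => w; rewrite /padd /popp; ring.
exact (idealD I_ideal Is (idealN I_ideal Iff')).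
Qed.

Lemma FA_eq0 g f : (forall w, f w = 0) -> FilA g f.
Proof.
move=> f0; exists [::]; split=> //; congr I: (ideal0 I_ideal).
by apply: functional_extensionality => w; rewrite /padd /popp /lincomb big_nil f0 subr0.
Qed.

Lemma FA_add g f h : FilA g f -> FilA g h -> FilA g (padd f h).
Proof.
move=> [s [Fs Ns Is]] [t [Ft Nt It]]; exists (s ++ t); split.
- by move=> x; rewrite mem_cat => /orP [/Fs|/Ft].
- by move=> x; rewrite mem_cat => /orP [/Ns|/Nt].
congr I: (idealD I_ideal Is It); apply: functional_extensionality => w.
by rewrite /padd /popp lincomb_cat; ring.
Qed.

Lemma FA_opp g f : FilA g f -> FilA g (popp f).
Proof.
move=> [s [Fs Ns Is]]; exists [seq (- x.1, x.2) | x <- s]; split.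
- by move=> _ /mapP [x /Fs Fx ->] /=; apply: filtN HF _ _ Fx.
- by move=> _ /mapP [x /Ns Nx ->] /=.
congr I: (idealN I_ideal Is); apply: functional_extensionality => w.
by rewrite /padd /popp lincombN; ring.
Qed.

Lemma FA_pmono g c u : normal_word prec G u -> F g c -> FilA g (pmono c u).
Proof.
move=> Nu Fc; exists [:: (c, u)]; split; try by move=> x /[!inE] /eqP ->.
congr I: (ideal0 I_ideal); rewrite lincomb1.
by apply: functional_extensionality => w; rewrite /padd /popp subrr.
Qed.

Lemma normal_nil : normal_word prec G [::].
Proof.
move=> p m Gp LMm [u [v /(congr1 size)]]; rewrite !size_cat /= => /esym /eqP.
by rewrite !addn_eq0 !size_eq0 (negbTE (G_LM_neq_nil Gp LMm)) andbF.
Qed.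

Lemma not_normal_reducible u :
  ~ normal_word prec G u -> exists p m, [/\ G p, is_LM prec p m & wdivides m u].
Proof.
move=> Nu; apply: NNPP => noRed; apply: Nu => p m Gp LMm mu.
by apply: noRed; exists p, m.
Qed.

Lemma groebner_LC p m : G p -> is_LM prec p m -> p m = 1.
Proof.
move=> Gp LMm; have [_ [m' [LMm' pm']]] := (G_groebner.1 p Gp).
by rewrite (is_LM_uniq prec_irr prec_trans LMm LMm').
Qed.

Lemma FA_pmono_reduce g m c :
  (forall f, fsupp f -> (forall w, F g (f w)) -> (forall w, f w != 0 -> prec w m) ->
     FilA g f) ->
  F g c -> FilA g (pmono c m).
Proof.
move=> below Fc; have [|/not_normal_reducible [p [M [Gp LMp [u [v Em]]]]]] :=
  classic (normal_word prec G m); first by move/FA_pmono; apply.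
set e := psandwich c u p v.
have Ie : I e.
  exact (idealMr I_ideal (idealMl I_ideal (ideal_gen_sub Gp) (fsupp_pmono _ _))
                 (fsupp_pmono _ _)).
have Fe w : F g (e w).
  have [->|/psandwich_supp [y -> _]] := eqVneq (e w) 0; first exact: filt0 HF _.
  by rewrite /e psandwichE -[g]gadd0; apply: filtM HF _ _ _ _ Fc (G_coef _ Gp).
have FA_diff : FilA g (padd (pmono c m) (popp e)).
  apply: below.
  - exact: fsupp_add (fsupp_pmono _ _) (fsupp_opp (ideal_fsupp I_ideal Ie)).
  - move=> w; apply: filtB HF _ _ _ _ (Fe w); rewrite /pmono.
    by case: ifP => // _; apply: filt0 HF _.
  move=> w; rewrite /padd /popp /pmono; case: (w =P m) => [->|wm].
    by rewrite Em /e psandwichE (groebner_LC Gp LMp) mulr1 subrr eqxx.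
  rewrite add0r oppr_eq0 => /psandwich_supp [y Ew py].
  have [yM|yM] := LMp.2 y py; first by case: wm; rewrite Ew Em yM.
  by rewrite Ew Em; apply: prec_cat.
apply: FA_sat FA_diff _; congr I: (idealN I_ideal Ie).
by apply: functional_extensionality => w; rewrite /padd /popp; ring.
Qed.

Lemma FA_below g m f :
  fsupp f -> (forall w, F g (f w)) -> (forall w, f w != 0 -> preceq prec w m) -> FilA g f.
Proof.
elim/(well_founded_ind prec_wf): m f => m IH.
have below f : fsupp f -> (forall w, F g (f w)) -> (forall w, f w != 0 -> prec w m) ->
    FilA g f.
  move=> fs Ff fm; have [/FA_eq0 //|[m1 [fm1 m1max]]] := fsupp_LM prec_trans prec_total fs.
  exact: IH (fm _ fm1) f fs Ff m1max.
move=> f fs Ff fm; set f1 := fun w => if w == m then 0 else f w.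
have -> : f = padd f1 (pmono (f m) m).
  apply: functional_extensionality => w; rewrite /padd /f1 /pmono.
  by case: (w =P m) => [->|]; rewrite ?add0r ?addr0.
apply: FA_add (FA_pmono_reduce below (Ff m)); apply: below.
- by case: fs => S HS; exists S => w; rewrite /f1; case: ifP => _; [rewrite eqxx | apply: HS].
- by move=> w; rewrite /f1; case: ifP => _ //; apply: filt0 HF _.
move=> w; rewrite /f1; case: (w =P m) => [_|wm]; first by rewrite eqxx.
by case/fm.
Qed.

Lemma FA_of_coef g f : fsupp f -> (forall w, F g (f w)) -> FilA g f.
Proof.
move=> fs Ff; have [/FA_eq0 //|[m [_ mmax]]] := fsupp_LM prec_trans prec_total fs.
exact: FA_below fs Ff mmax.
Qed.

Lemma FA_exhaustive f : fsupp f -> exists g, FilA g f.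
Proof.
case=> S HS; have [g Sg] := filt_bound HF (map f S); exists g.
apply: FA_of_coef => [|w]; first by exists S.
have [->|/HS wS] := eqVneq (f w) 0; first exact: filt0 HF _.
by apply: Sg; apply: map_f.
Qed.

Lemma FA_mul g t f h : FilA g f -> FilA t h -> FilA (gadd g t) (pmul f h).
Proof.
move=> FAf FAh; have fs_h := FA_fsupp FAh.
case: FAf => s [Fs _ Is]; case: FAh => r [Fr _ Ir].
apply: (@FA_sat _ (pmul (lincomb s) (lincomb r))).
  apply: FA_of_coef => [|w]; first exact: fsupp_mul (fsupp_lincomb s) (fsupp_lincomb r).
  rewrite /pmul; apply: (filt_sum HF) => i _.
  by apply: filtM HF _ _ _ _ (filt_lincomb HF _ Fs) (filt_lincomb HF _ Fr).
refine (ideal_subC I_ideal _); rewrite pmul_subE.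
exact (idealD I_ideal (idealMr I_ideal Is fs_h) (idealMl I_ideal Ir (fsupp_lincomb s))).
Qed.

Lemma FA_pconst g c : FilA g (pconst c) -> F g c.
Proof.
case=> s [Fs Ns Is].
have [r0|[m LMm]] := fsupp_LM prec_trans prec_total (ideal_fsupp I_ideal Is).
  move: (r0 [::]); rewrite /padd /popp /pconst eqxx => /eqP; rewrite subr_eq0 => /eqP ->.
  exact (filt_lincomb HF [::] Fs).
have [p [M [Gp LMp Mm]]] := G_groebner.2 _ Is (ex_intro _ m LMm.1) m LMm.
have [m0|m_nil] := eqVneq m [::]; first by case: (normal_nil Gp LMp); rewrite -m0.
move: LMm.1; rewrite /padd /popp /pconst (negbTE m_nil) add0r oppr_eq0.
by case/lincomb_nz/mapP => x /Ns Nx xm; case: (Nx p M Gp LMp); rewrite -xm.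
Qed.

Lemma FA_quot_exh_filtration : quot_exh_filtration gadd g0 I FilA.
Proof.
split.
- move=> g; split; last split.
  + by move=> f f' FAf _; apply: FA_sat.
  + exact: FA_eq0.
  + by move=> f h FAf /FA_opp; apply: FA_add.
- exact: FA_exhaustive.
- move=> g1 g2 f lt12 [s [Fs Ns Is]]; exists s; split=> // x /Fs.
  by case: HF => _ _ H _ _; apply: H.
- exact: FA_mul.
- have -> : @pone R n = pmono 1 [::].
    by apply: functional_extensionality => w; rewrite /pone /pmono; case: (w == [::]).
  by apply: FA_pmono normal_nil _; case: HF.
Qed.

Lemma filt_FA_pconst g c : F g c <-> FilA g (pconst c).
Proof. by split=> [|/FA_pconst //]; apply: FA_pmono normal_nil. Qed.

End QuotientFiltration.

Unset Implicit Arguments. Set Strict Implicit.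

Theorem theorem3p1 (d : Order.disp_t) (Gam : orderType d)
  (gadd : Gam -> Gam -> Gam) (g0 : Gam) (HGam : ordered_monoid gadd g0)
  (R : comPzRingType) (F : Gam -> R -> Prop) (HF : exh_filtration gadd g0 F)
  (n : nat) (prec : rel (word n)) (Hprec : monomial_ordering prec)
  (G : (word n -> R) -> Prop)
  (HG0 : forall g, G g -> fsupp g /\ forall w, F g0 (g w))
  (HGB : monic_groebner prec G (ideal_gen G))
  (HLM1 : forall g m, G g -> is_LM prec g m -> m != [::]) :
  quot_exh_filtration gadd g0 (ideal_gen G) (FA prec G (ideal_gen G) F) /\
  (forall (g : Gam) (c : R),
     F g c <-> FA prec G (ideal_gen G) F g (@pconst R n c)).
Proof.
case: HGam => _ _ gadd0 _; case: Hprec => [[irr trans total wf] [cat _]].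
have G_fsupp p : G p -> fsupp p by case/HG0.
have G_coef p w : G p -> F g0 (p w) by case/HG0.
split; first exact: FA_quot_exh_filtration.
exact (filt_FA_pconst HF trans total G_fsupp HGB HLM1).
Qed.
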